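(* Let $X=\bigsqcup_{\lambda\in\Lambda}G_\lambda$ be an MCQ, $R$ a ring, $M$ a left $R$-module, and let $f_1,f_2:X\times X\to R$, $\phi_1:X\times X\to M$, $\phi_2:\bigsqcup_\lambda(G_\lambda\times G_\lambda)\to M$ be maps. On the set $\widetilde X=\bigsqcup_{\lambda\in\Lambda}(G_\lambda\times M)$ define $(x,u)\triangleleft(y,v):=(x\triangleleft y,\ f_1(x,y)u+f_2(x,y)v+\phi_1(x,y))$ for all $(x,u),(y,v)\in\widetilde X$, and $(a,u)(b,v):=(ab,\ u+f_1(a,a^{-1})v+\phi_2(a,b))$ for all $(a,u),(b,v)\in G_\lambda\times M$. If $(f_1,f_2;\phi_1,\phi_2)$ is an augmented MCQ Alexander pair, then $\widetilde X$ with these operations is an MCQ whose groups are the $G_\lambda\times M$; moreover the identity of $G_\lambda\times M$ is $(e_\lambda,-\phi_2(e_\lambda,e_\lambda))$ and the inverse of $(a,u)\in G_\lambda\times M$ is $(a^{-1},\,-f_1(a,a)u-\phi_2(a^{-1},a)-\phi_2(e_\lambda,e_\lambda))$. Conversely, if $M=R$ and $\widetilde X$ with these operations is an MCQ with groups $G_\lambda\times R$, then $(f_1,f_2;\phi_1,\phi_2)$ is an augmented MCQ Alexander pair.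
   Context: A multiple conjugation quandle (MCQ) is a set $X=\bigsqcup_{\lambda\in\Lambda}G_\lambda$ that is a disjoint union of groups $G_\lambda$, together with a binary operation $\triangleleft:X\times X\to X$ such that: (i) for all $a,b\in G_\lambda$, $a\triangleleft b=b^{-1}ab$; (ii) for all $x\in X$ and $a,b\in G_\lambda$, $x\triangleleft e_\lambda=x$ and $x\triangleleft(ab)=(x\triangleleft a)\triangleleft b$, where $e_\lambda$ is the identity of $G_\lambda$; (iii) for all $x,y,z\in X$, $(x\triangleleft y)\triangleleft z=(x\triangleleft z)\triangleleft(y\triangleleft z)$; (iv) for all $x\in X$ and $a,b\in G_\lambda$, the elements $a\triangleleft x$ and $b\triangleleft x$ lie in a common group $G_\mu$ and $(ab)\triangleleft x=(a\triangleleft x)(b\triangleleft x)$. For $x\in X$, $G_x$ denotes the group $G_\lambda$ containing $x$, $e_x$ its identity, and $x^{-1}$ the inverse of $x$ in $G_x$. $\bigsqcup_{\lambda}(G_\lambda\times G_\lambda)$ is the set of pairs of elements lying in a common group $G_\lambda$. Rings have a multiplicative identity $1\neq0$ and need not be commutative. An MCQ Alexander pair is a pair of maps $f_1,f_2:X\times X\to R$ such that: (A1) for all $a,b\in G_\lambda$: $f_1(a,b)+f_2(a,b)=f_1(a,a^{-1}b)$; (A2) for all $a,b\in G_\lambda$ and $x\in X$: $f_1(a,x)=f_1(b,x)$ and $f_2(ab,x)=f_2(a,x)+f_1(b\triangleleft x,a^{-1}\triangleleft x)f_2(b,x)$; (A3) for all $x\in X$ and $a,b\in G_\lambda$: $f_1(x,e_\lambda)=1$,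 $f_1(x,ab)=f_1(x\triangleleft a,b)f_1(x,a)$, $f_2(x,ab)=f_1(x\triangleleft a,b)f_2(x,a)$; (A4) for all $x,y,z\in X$: $f_1(x\triangleleft y,z)f_1(x,y)=f_1(x\triangleleft z,y\triangleleft z)f_1(x,z)$; $f_1(x\triangleleft y,z)f_2(x,y)=f_2(x\triangleleft z,y\triangleleft z)f_1(y,z)$; $f_2(x\triangleleft y,z)=f_1(x\triangleleft z,y\triangleleft z)f_2(x,z)+f_2(x\triangleleft z,y\triangleleft z)f_2(y,z)$. For an MCQ Alexander pair $(f_1,f_2)$ and a left $R$-module $M$, an $(f_1,f_2)$-twisted 2-cocycle is a pair of maps $\phi_1:X\times X\to M$, $\phi_2:\bigsqcup_\lambda(G_\lambda\times G_\lambda)\to M$ such that: (T1) for all $a,b,c\in G_\lambda$: $\phi_2(a,b)+\phi_2(ab,c)=f_1(a,a^{-1})\phi_2(b,c)+\phi_2(a,bc)$; (T2) for all $a,b\in G_\lambda$: $f_1(b,b^{-1})\phi_1(a,b)+\phi_2(b,b^{-1}ab)=\phi_2(a,b)$; (T3) for all $x\in X$, $a,b\in G_\lambda$: $f_2(x,ab)\phi_2(a,b)+\phi_1(x,ab)=f_1(x\triangleleft a,b)\phi_1(x,a)+\phi_1(x\triangleleft a,b)$; (T4) for all $x,y,z\in X$: $f_1(x\triangleleft y,z)\phi_1(x,y)+\phi_1(x\triangleleft y,z)=f_1(x\triangleleft z,y\triangleleft z)\phi_1(x,z)+f_2(x\triangleleft z,y\triangleleft z)\phi_1(y,z)+\phi_1(x\triangleleft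 z,y\triangleleft z)$; (T5) for all $a,b\in G_\lambda$, $x\in X$: $f_1(ab,x)\phi_2(a,b)+\phi_1(ab,x)=\phi_1(a,x)+f_1(a\triangleleft x,a^{-1}\triangleleft x)\phi_1(b,x)+\phi_2(a\triangleleft x,b\triangleleft x)$. A quadruple $(f_1,f_2;\phi_1,\phi_2)$ is an augmented MCQ Alexander pair if $(f_1,f_2)$ is an MCQ Alexander pair and $(\phi_1,\phi_2)$ is an $(f_1,f_2)$-twisted 2-cocycle. *)

From HB Require Import structures.
From mathcomp Require Import all_boot all_order all_algebra.
Set Implicit Arguments. Unset Strict Implicit. Unset Printing Implicit Defensive.
Import GRing.Theory.
Local Open Scope ring_scope.

(* A multiple conjugation quandle X = ⊔_{l : L} G_l is encoded by:
   - lab : X -> L      the index of the group containing x (so G_l = lab^-1 l)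
   - mul : X -> X -> X the group product (only meaningful on pairs in a common G_l)
   - e   : L -> X      e l = identity of G_l
   - inv : X -> X      inverse of x in G_x
   - tri : X -> X -> X the operation ◁ *)

Definition same_grp {X L : Type} (lab : X -> L) (a b : X) := lab a = lab b.

Definition is_group_family {X L : Type} (lab : X -> L) (mul : X -> X -> X)
  (e : L -> X) (inv : X -> X) : Prop :=
  [/\ (forall l, lab (e l) = l),
      (forall a b, lab a = lab b -> lab (mul a b) = lab a),
      (forall a, lab (inv a) = lab a),
      (forall a b c, lab a = lab b -> lab b = lab c ->
          mul (mul a b) c = mul a (mul b c)) &
      ((forall a, mul (e (lab a)) a = a /\ mul a (e (lab a)) = a) /\
       (forall a, mul (inv a) a = e (lab a) /\ mul a (inv a) = e (lab a)))].

Definition is_MCQ {X L : Type} (lab : X -> L) (mul : X -> X -> X)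
  (e : L -> X) (inv : X -> X) (tri : X -> X -> X) : Prop :=
  [/\ is_group_family lab mul e inv,
      (* (i) *)
      (forall a b, lab a = lab b -> tri a b = mul (mul (inv b) a) b),
      (* (ii) *)
      (forall x l, tri x (e l) = x) /\
      (forall x a b, lab a = lab b -> tri x (mul a b) = tri (tri x a) b),
      (* (iii) *)
      (forall x y z, tri (tri x y) z = tri (tri x z) (tri y z)) &
      (* (iv) *)
      (forall x a b, lab a = lab b ->
         lab (tri a x) = lab (tri b x) /\
         tri (mul a b) x = mul (tri a x) (tri b x))].

Definition alex_pair {X L : Type} (lab : X -> L) (mul : X -> X -> X)
  (e : L -> X) (inv : X -> X) (tri : X -> X -> X) (R : nzRingType)
  (f1 f2 : X -> X -> R) : Prop :=
  [/\ (* A1 *)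
      (forall a b, lab a = lab b -> f1 a b + f2 a b = f1 a (mul (inv a) b)),
      (* A2 *)
      (forall a b x, lab a = lab b ->
         f1 a x = f1 b x /\
         f2 (mul a b) x = f2 a x + f1 (tri b x) (tri (inv a) x) * f2 b x),
      (* A3 *)
      (forall x l, f1 x (e l) = 1) /\
      (forall x a b, lab a = lab b ->
         f1 x (mul a b) = f1 (tri x a) b * f1 x a /\
         f2 x (mul a b) = f1 (tri x a) b * f2 x a) &
      (* A4 *)
      (forall x y z,
         [/\ f1 (tri x y) z * f1 x y = f1 (tri x z) (tri y z) * f1 x z,
             f1 (tri x y) z * f2 x y = f2 (tri x z) (tri y z) * f1 y z &
             f2 (tri x y) z = f1 (tri x z) (tri y z) * f2 x z
                              + f2 (tri x z) (tri y z) * f2 y z])].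

(* (f1,f2)-twisted 2-cocycle (T1)-(T5). phi2 is given as a map X -> X -> M;
   only its values on pairs lying in a common group are ever used. *)
Definition twisted_cocycle {X L : Type} (lab : X -> L) (mul : X -> X -> X)
  (e : L -> X) (inv : X -> X) (tri : X -> X -> X) (R : nzRingType)
  (M : lmodType R) (f1 f2 : X -> X -> R) (phi1 phi2 : X -> X -> M) : Prop :=
  [/\ (* T1 *)
      (forall a b c, lab a = lab b -> lab b = lab c ->
         phi2 a b + phi2 (mul a b) c
         = f1 a (inv a) *: phi2 b c + phi2 a (mul b c)),
      (* T2 *)
      (forall a b, lab a = lab b ->
         f1 b (inv b) *: phi1 a b + phi2 b (mul (mul (inv b) a) b) = phi2 a b),
      (* T3 *)
      (forall x a b, lab a = lab b ->
         f2 x (mul a b) *: phi2 a b + phi1 x (mul a b)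
         = f1 (tri x a) b *: phi1 x a + phi1 (tri x a) b),
      (* T4 *)
      (forall x y z,
         f1 (tri x y) z *: phi1 x y + phi1 (tri x y) z
         = f1 (tri x z) (tri y z) *: phi1 x z + f2 (tri x z) (tri y z) *: phi1 y z
           + phi1 (tri x z) (tri y z)) &
      (* T5 *)
      (forall a b x, lab a = lab b ->
         f1 (mul a b) x *: phi2 a b + phi1 (mul a b) x
         = phi1 a x + f1 (tri a x) (tri (inv a) x) *: phi1 b x
           + phi2 (tri a x) (tri b x))].

Definition augmented_alex_pair {X L : Type} (lab : X -> L) (mul : X -> X -> X)
  (e : L -> X) (inv : X -> X) (tri : X -> X -> X) (R : nzRingType)
  (M : lmodType R) (f1 f2 : X -> X -> R) (phi1 phi2 : X -> X -> M) : Prop :=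
  alex_pair lab mul e inv tri f1 f2 /\
  twisted_cocycle lab mul e inv tri f1 f2 phi1 phi2.

(* The extension  X~ = ⊔_l (G_l × M), represented as X * M with label lab ∘ fst. *)
Section Tilde.
Variables (X L : Type) (lab : X -> L) (mul : X -> X -> X) (e : L -> X)
  (inv : X -> X) (tri : X -> X -> X) (R : nzRingType) (M : lmodType R)
  (f1 f2 : X -> X -> R) (phi1 phi2 : X -> X -> M).

Definition labT (p : X * M) : L := lab p.1.
Definition triT (p q : X * M) : X * M :=
  (tri p.1 q.1, f1 p.1 q.1 *: p.2 + f2 p.1 q.1 *: q.2 + phi1 p.1 q.1).
Definition mulT (p q : X * M) : X * M :=
  (mul p.1 q.1, p.2 + f1 p.1 (inv p.1) *: q.2 + phi2 p.1 q.1).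
Definition eT (l : L) : X * M := (e l, - phi2 (e l) (e l)).
Definition invT (p : X * M) : X * M :=
  (inv p.1, - (f1 p.1 p.1 *: p.2) - phi2 (inv p.1) p.1
            - phi2 (e (lab p.1)) (e (lab p.1))).
End Tilde.

From HB Require Import structures.
From mathcomp Require Import all_boot all_order all_algebra.
Local Open Scope ring_scope.
Set Implicit Arguments. Unset Strict Implicit. Unset Printing Implicit Defensive.
Import GRing.Theory.

(* Every operation of X~ = ⊔_l (G_l × M) is "affine over X": its first
   component is the operation of X and its second component is an affine
   expression in the module coordinates, with coefficients f1, f2 and
   constant terms phi1, phi2.  Hence each MCQ axiom for X~ is the MCQ axiom
   for X together with one identity between affine expressions in M.
   - Forward direction: the group laws of G_l × M and axioms (i)-(iv) of X~
     are checked one at a time, each reducing by Z-module arithmetic to the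
     axioms (A1)-(A4), (T1)-(T5) and a few consequences of them (the
     identities of f1 along inverses, phi2 at the identity, ...).
   - Converse (M = R): the identity and inverse of G_l × R are forced to lie
     over e_l and a^-1; evaluating each axiom of X~ at module coordinates 0
     gives the cocycle condition (T_k), and comparing with the evaluation at
     a unit coordinate 1 gives the coefficient condition (A_k). *)

Inductive abel_expr := AVar of nat | AAdd of abel_expr & abel_expr
                     | AOpp of abel_expr | AZero.

Fixpoint abel_eval (V : zmodType) (env : seq V) t : V :=
  match t with
  | AVar n => nth 0 env n
  | AAdd a b => abel_eval env a + abel_eval env b
  | AOpp a => - abel_eval env a
  | AZero => 0
  end.

Fixpoint abel_coef t (n : nat) : int :=
  match t with
  | AVar m => ((m == n) : nat)%:Z
  | AAdd a b => abel_coef a n + abel_coef b n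
  | AOpp a => - abel_coef a n
  | AZero => 0
  end.

Lemma nth_as_sum (V : zmodType) (env : seq V) m :
  nth 0 env m = \sum_(i < size env) nth 0 env i *~ ((m == i) : nat)%:Z.
Proof.
elim: env m => [|x env IH] m /=; first by rewrite big_ord0 nth_nil.
rewrite big_ord_recl /=; case: m => [|m] /=; last by rewrite add0r IH.
by rewrite big1 ?addr0.
Qed.

Lemma abel_eval_coef (V : zmodType) (env : seq V) t :
  abel_eval env t = \sum_(i < size env) nth 0 env i *~ abel_coef t i.
Proof.
elim: t => [m|a IHa b IHb|a IHa|] /=.
- exact: nth_as_sum.
- by rewrite IHa IHb -big_split /=; apply: eq_bigr => i _; rewrite mulrzDr.
- by rewrite IHa -sumrN; apply: eq_bigr => i _; rewrite mulrNz.
- by rewrite big1.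
Qed.

Lemma abel_sound (V : zmodType) (env : seq V) l r :
  all (fun i => abel_coef l i == abel_coef r i) (iota 0 (size env)) ->
  abel_eval env l = abel_eval env r.
Proof.
move=> /allP eq_coef; rewrite !abel_eval_coef; apply: eq_bigr => i _.
by rewrite (eqP (eq_coef i _)) // mem_iota /= add0n.
Qed.

Lemma eq_by_diff (V : zmodType) (P Q l r : V) : P = Q -> l - r = P - Q -> l = r.
Proof. by move=> -> /eqP; rewrite subrr subr_eq0 => /eqP. Qed.

Ltac abel_index x l :=
  match l with
  | ?y :: _ => let _ := match goal with _ => unify x y end in constr:(0%N)
  | _ :: ?l' => let n := abel_index x l' in constr:(n.+1)
  end.

Ltac abel_mem x l :=
  match l with
  | ?y :: _ => let _ := match goal with _ => unify x y end in constr:(true)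
  | _ :: ?l' => abel_mem x l'
  | _ => constr:(false)
  end.

Ltac abel_atoms t acc :=
  match t with
  | (?a + ?b)%R => let acc' := abel_atoms a acc in abel_atoms b acc'
  | (- ?a)%R => abel_atoms a acc
  | 0%R => acc
  | _ => let b := abel_mem t acc in
         match b with
         | true => acc
         | false => constr:(t :: acc)
         end
  end.

Ltac abel_reify t env :=
  match t with
  | (?a + ?b)%R => let ra := abel_reify a env in let rb := abel_reify b env in
                   constr:(AAdd ra rb)
  | (- ?a)%R => let ra := abel_reify a env in constr:(AOpp ra)
  | 0%R => constr:(AZero)
  | _ => let n := abel_index t env in constr:(AVar n)
  end.

Ltac abel :=
  match goal with
  | |- @eq ?V ?l ?r =>
    let env := abel_atoms l (@nil V) in
    let env := abel_atoms r env in
    let rl := abel_reify l env in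
    let rr := abel_reify r env in
    apply: (@abel_sound _ env rl rr); vm_compute; reflexivity
  end.

Section GroupFamily.
Variables (X L : Type) (lab : X -> L) (mul : X -> X -> X) (e : L -> X)
  (inv : X -> X).
Hypothesis HG : is_group_family lab mul e inv.

Lemma grp_labe l : lab (e l) = l.
Proof. by case: HG. Qed.
Lemma grp_labM a b : lab a = lab b -> lab (mul a b) = lab a.
Proof. by case: HG => _ labM *; apply: labM. Qed.
Lemma grp_labV a : lab (inv a) = lab a.
Proof. by case: HG. Qed.
Lemma grp_mulA a b c :
  lab a = lab b -> lab b = lab c -> mul (mul a b) c = mul a (mul b c).
Proof. by case: HG => _ _ _ mulA *; apply: mulA. Qed.
Lemma grp_mul1 a : mul (e (lab a)) a = a.
Proof. by case: HG => _ _ _ _ [unit _]; case: (unit a). Qed.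
Lemma grp_mulr1 a : mul a (e (lab a)) = a.
Proof. by case: HG => _ _ _ _ [unit _]; case: (unit a). Qed.
Lemma grp_mulV a : mul (inv a) a = e (lab a).
Proof. by case: HG => _ _ _ _ [_ invK]; case: (invK a). Qed.
Lemma grp_mulrV a : mul a (inv a) = e (lab a).
Proof. by case: HG => _ _ _ _ [_ invK]; case: (invK a). Qed.

Lemma grp_mulee l : mul (e l) (e l) = e l.
Proof. by rewrite -{1}(grp_labe l) grp_mul1. Qed.

Lemma grp_rinv_uniq y z : lab y = lab z -> mul y z = e (lab y) -> z = inv y.
Proof.
move=> yz yzE.
have : mul (inv y) (mul y z) = mul (inv y) (e (lab y)) by rewrite yzE.
have E : e (lab y) = e (lab (inv y)) by rewrite grp_labV.
by rewrite -grp_mulA ?grp_labV // grp_mulV {2}E grp_mulr1 yz grp_mul1.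
Qed.

Lemma grp_linv_uniq x a : lab x = lab a -> mul x a = e (lab a) -> x = inv a.
Proof.
move=> xa xaE.
have : mul (mul x a) (inv a) = mul (e (lab a)) (inv a) by rewrite xaE.
have E : e (lab a) = e (lab (inv a)) by rewrite grp_labV.
by rewrite grp_mulA ?grp_labV // grp_mulrV -xa grp_mulr1 xa E grp_mul1.
Qed.

Lemma grp_idem y : mul y y = y -> y = e (lab y).
Proof.
move=> yy; have : mul (mul y y) (inv y) = mul y (inv y) by rewrite yy.
by rewrite grp_mulA ?grp_labV // grp_mulrV grp_mulr1.
Qed.

Lemma grp_invK a : inv (inv a) = a.
Proof.
by symmetry; apply: grp_rinv_uniq; rewrite ?grp_mulV grp_labV.
Qed.

Lemma grp_inve l : inv (e l) = e l.
Proof. by symmetry; apply: grp_rinv_uniq; rewrite // grp_labe grp_mulee. Qed.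

Lemma grp_invMV a b : lab a = lab b -> inv (mul (inv b) a) = mul (inv a) b.
Proof.
move=> ab; symmetry; apply: grp_rinv_uniq; first by rewrite !grp_labM ?grp_labV.
rewrite grp_mulA ?grp_labM ?grp_labV // -(grp_mulA (a:=a)) ?grp_labV //.
by rewrite grp_mulrV ab grp_mul1 grp_mulV.
Qed.

Lemma grp_invM a b : lab a = lab b -> inv (mul a b) = mul (inv b) (inv a).
Proof.
move=> ab; symmetry; apply: grp_rinv_uniq; first by rewrite !grp_labM ?grp_labV.
rewrite grp_mulA ?grp_labM ?grp_labV // -(grp_mulA (a:=b)) ?grp_labV //.
rewrite grp_mulrV -ab.
have -> : e (lab a) = e (lab (inv a)) by rewrite grp_labV.
by rewrite grp_mul1 grp_mulrV grp_labV.
Qed.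

Lemma grp_mul_conj a b : lab a = lab b -> mul b (mul (mul (inv b) a) b) = mul a b.
Proof.
move=> ab; have lVba : lab (inv b) = lab a by rewrite grp_labV.
rewrite -grp_mulA ?grp_labM ?grp_labV // -(grp_mulA (a:=b)) ?grp_labV //.
by rewrite grp_mulrV -ab grp_mul1.
Qed.

End GroupFamily.

Section MCQFacts.
Variables (X L : Type) (lab : X -> L) (mul : X -> X -> X) (e : L -> X)
  (inv : X -> X) (tri : X -> X -> X).
Hypothesis HM : is_MCQ lab mul e inv tri.

Lemma mcq_grp : is_group_family lab mul e inv.
Proof. by case: HM. Qed.
Lemma mcq_conj a b : lab a = lab b -> tri a b = mul (mul (inv b) a) b.
Proof. by case: HM => _ conj *; apply: conj. Qed.
Lemma mcq_trie x l : tri x (e l) = x.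
Proof. by case: HM => _ _ [trie _] *; apply: trie. Qed.
Lemma mcq_triM x a b : lab a = lab b -> tri x (mul a b) = tri (tri x a) b.
Proof. by case: HM => _ _ [_ triM] *; apply: triM. Qed.
Lemma mcq_selfdistr x y z : tri (tri x y) z = tri (tri x z) (tri y z).
Proof. by case: HM => _ _ _ sd *; apply: sd. Qed.
Lemma mcq_labT x a b : lab a = lab b -> lab (tri a x) = lab (tri b x).
Proof. by case: HM => _ _ _ _ hom ab; case: (hom x a b ab). Qed.
Lemma mcq_Mtri x a b : lab a = lab b -> tri (mul a b) x = mul (tri a x) (tri b x).
Proof. by case: HM => _ _ _ _ hom ab; case: (hom x a b ab). Qed.

Let HG := mcq_grp.

Lemma mcq_lab_conj a b : lab a = lab b -> lab (tri a b) = lab a.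
Proof.
by move=> ab; rewrite mcq_conj // !(grp_labM HG) ?(grp_labV HG) // (grp_labM HG) ?(grp_labV HG).
Qed.

Lemma mcq_trie_id l x : tri (e l) x = e (lab (tri (e l) x)).
Proof.
apply: (grp_idem HG); rewrite -mcq_Mtri; last by rewrite (grp_labe HG).
by rewrite (grp_mulee HG).
Qed.

Lemma mcq_triV x a : inv (tri a x) = tri (inv a) x.
Proof.
have lVa : lab a = lab (inv a) by rewrite (grp_labV HG).
symmetry; apply: (grp_rinv_uniq HG); first exact: mcq_labT.
rewrite -mcq_Mtri // (grp_mulrV HG) mcq_trie_id.
by congr e; apply: mcq_labT; rewrite (grp_labe HG).
Qed.

Lemma mcq_self a : tri a a = a.
Proof. by rewrite mcq_conj // (grp_mulV HG) (grp_mul1 HG). Qed.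

Lemma mcq_e_conj a : tri (e (lab a)) a = e (lab a).
Proof.
rewrite mcq_conj ?(grp_labe HG) //.
have -> : e (lab a) = e (lab (inv a)) by rewrite (grp_labV HG).
by rewrite (grp_mulr1 HG) (grp_mulV HG) (grp_labV HG).
Qed.

End MCQFacts.

Section Extension.
Variables (X L : Type) (lab : X -> L) (mul : X -> X -> X) (e : L -> X)
  (inv : X -> X) (tri : X -> X -> X) (R : nzRingType) (f1 f2 : X -> X -> R).
Hypothesis HM : is_MCQ lab mul e inv tri.
Hypothesis HA : alex_pair lab mul e inv tri f1 f2.
Variables (M : lmodType R) (phi1 phi2 : X -> X -> M).
Hypothesis HT : twisted_cocycle lab mul e inv tri f1 f2 phi1 phi2.

Let HG := mcq_grp HM.

Lemma alex_A1 a b : lab a = lab b -> f1 a b + f2 a b = f1 a (mul (inv a) b).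
Proof. by case: HA => A1 *; apply: A1. Qed.
Lemma alex_f1_grp a b x : lab a = lab b -> f1 a x = f1 b x.
Proof. by case: HA => _ A2 _ _ ab; case: (A2 a b x ab). Qed.
Lemma alex_A2 a b x : lab a = lab b ->
  f2 (mul a b) x = f2 a x + f1 (tri b x) (tri (inv a) x) * f2 b x.
Proof. by case: HA => _ A2 _ _ ab; case: (A2 a b x ab). Qed.
Lemma alex_f1e x l : f1 x (e l) = 1.
Proof. by case: HA => _ _ [A3 _] _; apply: A3. Qed.
Lemma alex_A3f1 x a b : lab a = lab b -> f1 x (mul a b) = f1 (tri x a) b * f1 x a.
Proof. by case: HA => _ _ [_ A3] _ ab; case: (A3 x a b ab). Qed.
Lemma alex_A3f2 x a b : lab a = lab b -> f2 x (mul a b) = f1 (tri x a) b * f2 x a.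
Proof. by case: HA => _ _ [_ A3] _ ab; case: (A3 x a b ab). Qed.
Lemma alex_A4 x y z :
  [/\ f1 (tri x y) z * f1 x y = f1 (tri x z) (tri y z) * f1 x z,
      f1 (tri x y) z * f2 x y = f2 (tri x z) (tri y z) * f1 y z &
      f2 (tri x y) z = f1 (tri x z) (tri y z) * f2 x z
                       + f2 (tri x z) (tri y z) * f2 y z].
Proof. by case: HA. Qed.

Lemma alex_f1_inv_l a : f1 a (inv a) * f1 a a = 1.
Proof.
have := alex_A3f1 a (esym (grp_labV HG a)).
by rewrite (grp_mulrV HG) alex_f1e (mcq_self HM) => <-.
Qed.

Lemma alex_f1_inv_r a : f1 a a * f1 a (inv a) = 1.
Proof.
have := alex_A3f1 a (grp_labV HG a); rewrite (grp_mulV HG) alex_f1e => ->.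
congr (_ * _); apply: alex_f1_grp.
by rewrite (mcq_lab_conj HM) // (grp_labV HG).
Qed.

Lemma alex_f1_invM a b : lab a = lab b ->
  f1 (mul a b) (inv (mul a b)) = f1 a (inv a) * f1 b (inv b).
Proof.
move=> ab; rewrite (grp_invM HG) // alex_A3f1 ?(grp_labV HG) //.
congr (_ * _); apply: alex_f1_grp; last by rewrite (grp_labM HG).
by rewrite (mcq_lab_conj HM) ?(grp_labM HG) ?(grp_labV HG).
Qed.

Lemma alex_f2_e x a : f2 x a = f1 x a * f2 x (e (lab a)).
Proof.
by have := alex_A3f2 x (grp_labe HG (lab a)); rewrite (grp_mul1 HG) (mcq_trie HM).
Qed.

Lemma alex_f2_e_tri x a :
  f2 (tri x a) (e (lab a)) = f1 x a * f2 x (e (lab a)) * f1 a (inv a).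
Proof.
have [_ A4b _] := alex_A4 x (e (lab a)) a.
move: A4b; rewrite (mcq_trie HM) (mcq_e_conj HM) => ->.
rewrite (alex_f1_grp _ (b:=a)) ?(grp_labe HG) //.
by rewrite -mulrA alex_f1_inv_r mulr1.
Qed.

Lemma alex_f2_twist x a b : lab a = lab b ->
  f2 x (mul a b) * f1 a (inv a) = f2 (tri x a) b.
Proof.
move=> ab; rewrite alex_A3f2 // [f2 x a]alex_f2_e [f2 (tri x a) b]alex_f2_e.
by rewrite -ab alex_f2_e_tri !mulrA.
Qed.

Lemma coc_T1 a b c : lab a = lab b -> lab b = lab c ->
  phi2 a b + phi2 (mul a b) c = f1 a (inv a) *: phi2 b c + phi2 a (mul b c).
Proof. by case: HT => T1 *; apply: T1. Qed.
Lemma coc_T2 a b : lab a = lab b ->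
  f1 b (inv b) *: phi1 a b + phi2 b (mul (mul (inv b) a) b) = phi2 a b.
Proof. by case: HT => _ T2 *; apply: T2. Qed.
Lemma coc_T3 x a b : lab a = lab b ->
  f2 x (mul a b) *: phi2 a b + phi1 x (mul a b)
  = f1 (tri x a) b *: phi1 x a + phi1 (tri x a) b.
Proof. by case: HT => _ _ T3 *; apply: T3. Qed.
Lemma coc_T4 x y z :
  f1 (tri x y) z *: phi1 x y + phi1 (tri x y) z
  = f1 (tri x z) (tri y z) *: phi1 x z + f2 (tri x z) (tri y z) *: phi1 y z
    + phi1 (tri x z) (tri y z).
Proof. by case: HT => _ _ _ T4 *; apply: T4. Qed.
Lemma coc_T5 a b x : lab a = lab b ->
  f1 (mul a b) x *: phi2 a b + phi1 (mul a b) x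
  = phi1 a x + f1 (tri a x) (tri (inv a) x) *: phi1 b x
    + phi2 (tri a x) (tri b x).
Proof. by case: HT => _ _ _ _ T5 *; apply: T5. Qed.

Lemma coc_phi2_e_l l c : lab c = l -> phi2 (e l) c = phi2 (e l) (e l).
Proof.
move=> <-; have := coc_T1 (erefl (lab (e (lab c)))) (grp_labe HG (lab c)).
rewrite (grp_mul1 HG) (grp_mulee HG) (grp_inve HG) alex_f1e scale1r.
by move/addIr.
Qed.

Lemma coc_phi2_e_r a :
  phi2 a (e (lab a)) = f1 a (inv a) *: phi2 (e (lab a)) (e (lab a)).
Proof.
have := coc_T1 (esym (grp_labe HG (lab a))) (erefl (lab (e (lab a)))).
by rewrite (grp_mulr1 HG) (grp_mulee HG); move/addIr.
Qed.

(* The operations of X~ make each G_l × M a group, with the stated identity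
   and inverse; associativity is (T1) twisted by alex_f1_invM. *)
Lemma ext_group_family : is_group_family (labT lab (M:=M))
  (mulT mul inv f1 phi2) (eT e phi2) (invT lab e inv f1 phi2).
Proof.
rewrite /is_group_family /labT /mulT /eT /invT /=; split.
- by move=> l; rewrite (grp_labe HG).
- by move=> [a u] [b v] /= ab; apply: (grp_labM HG).
- by move=> [a u] /=; rewrite (grp_labV HG).
- move=> [a u] [b v] [c w] /= ab bc; congr pair; first exact: (grp_mulA HG).
  rewrite alex_f1_invM // !scalerDr !scalerA.
  apply: (eq_by_diff (coc_T1 ab bc)); abel.
split => -[a u] /=; split; congr pair.
- exact: (grp_mul1 HG).
- by rewrite (grp_inve HG) alex_f1e scale1r coc_phi2_e_l //; abel.
- exact: (grp_mulr1 HG).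
- by rewrite coc_phi2_e_r scalerN; abel.
- exact: (grp_mulV HG).
- by rewrite (grp_invK HG) (alex_f1_grp _ (b:=a)) ?(grp_labV HG) //; abel.
- exact: (grp_mulrV HG).
- rewrite !scalerDr !scalerN scalerA alex_f1_inv_l scale1r.
  have := coc_T1 (esym (grp_labV HG a)) (grp_labV HG a).
  rewrite (grp_mulrV HG) (grp_mulV HG) coc_phi2_e_l // coc_phi2_e_r => T1.
  apply: (eq_by_diff T1); abel.
Qed.

(* Axiom (i) for X~: inside G_l × M the operation ◁ is conjugation; this is
   (A1) for the coefficients and (T2) combined with two instances of (T1)
   for the constant term. *)
Lemma ext_conj (p q : X * M) : labT lab p = labT lab q ->
  triT tri f1 f2 phi1 p q =
  mulT mul inv f1 phi2 (mulT mul inv f1 phi2 (invT lab e inv f1 phi2 q) p) q.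
Proof.
case: p q => [a u] [b v]; rewrite /labT /triT /mulT /invT /= => ab.
congr pair; first exact: (mcq_conj HM).
have lVb : lab (inv b) = lab b by rewrite (grp_labV HG).
have lVba : lab (inv b) = lab a by rewrite (grp_labV HG).
have lc : lab (mul (mul (inv b) a) b) = lab b.
  by rewrite !(grp_labM HG) ?lVb.
have T2 : f1 b b *: (f1 b (inv b) *: phi1 a b + phi2 b (mul (mul (inv b) a) b))
  = f1 b b *: phi2 a b by rewrite coc_T2.
rewrite scalerDr scalerA alex_f1_inv_r scale1r in T2.
have f1Vb : f1 (inv b) b = f1 b b by apply: alex_f1_grp.
have f1ab : f1 a b = f1 b b by apply: alex_f1_grp.
have T1a := coc_T1 lVba ab.
have T1b := coc_T1 lVb (esym lc).
rewrite (grp_mul_conj HG) // (grp_mulV HG) (coc_phi2_e_l lc) in T1b.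
rewrite (grp_invK HG) f1Vb in T1a T1b.
rewrite (grp_invK HG) (grp_invMV HG) //.
rewrite [f1 (mul (inv b) a) _](alex_f1_grp _ (b:=a)) ?(grp_labM HG) // -alex_A1 //.
rewrite scalerDl f1Vb f1ab.
apply: (eq_by_diff (esym T1a)); apply: (eq_by_diff T2); apply: (eq_by_diff T1b).
abel.
Qed.

(* Axiom (ii) for X~, unit law: (T3) at a = b = e together with (A3). *)
Lemma ext_trie p l : triT tri f1 f2 phi1 p (eT e phi2 l) = p.
Proof.
case: p => [x u]; rewrite /triT /eT /=.
congr pair; first exact: (mcq_trie HM).
have := coc_T3 x (erefl (lab (e l))).
rewrite (grp_mulee HG) (mcq_trie HM) alex_f1e scale1r => /addIr T3.
by rewrite scale1r scalerN T3; abel.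
Qed.

(* Axiom (ii) for X~, action of a product: (A3), (T3) and alex_f2_twist. *)
Lemma ext_triM p q r : labT lab q = labT lab r ->
  triT tri f1 f2 phi1 p (mulT mul inv f1 phi2 q r) =
  triT tri f1 f2 phi1 (triT tri f1 f2 phi1 p q) r.
Proof.
case: p q r => [x w] [a u] [b v]; rewrite /labT /triT /mulT /= => ab.
congr pair; first exact: (mcq_triM HM).
rewrite !scalerDr !scalerA alex_f2_twist // alex_A3f1 //.
by apply: (eq_by_diff (coc_T3 x ab)); rewrite alex_A3f2 //; abel.
Qed.

(* Axiom (iii) for X~: right self-distributivity is (A4) and (T4). *)
Lemma ext_selfdistr p q r :
  triT tri f1 f2 phi1 (triT tri f1 f2 phi1 p q) r =
  triT tri f1 f2 phi1 (triT tri f1 f2 phi1 p r) (triT tri f1 f2 phi1 q r).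
Proof.
case: p q r => [x u] [y v] [z w]; rewrite /triT /=.
congr pair; first exact: (mcq_selfdistr HM).
have [A4a A4b A4c] := alex_A4 x y z.
rewrite !scalerDr !scalerA A4a A4b A4c scalerDl.
by apply: (eq_by_diff (coc_T4 x y z)); abel.
Qed.

(* Axiom (iv) for X~: _ ◁ r is a group homomorphism, by (A2), (A4) and (T5). *)
Lemma ext_tri_hom r p q : labT lab p = labT lab q ->
  labT lab (triT tri f1 f2 phi1 p r) = labT lab (triT tri f1 f2 phi1 q r) /\
  triT tri f1 f2 phi1 (mulT mul inv f1 phi2 p q) r =
  mulT mul inv f1 phi2 (triT tri f1 f2 phi1 p r) (triT tri f1 f2 phi1 q r).
Proof.
case: r p q => [x w] [a u] [b v]; rewrite /labT /triT /mulT /= => ab.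
split; first exact: (mcq_labT HM).
congr pair; first exact: (mcq_Mtri HM).
have [A4 _ _] := alex_A4 a (inv a) x.
have T5 := coc_T5 x ab.
have f1ab : f1 (mul a b) x = f1 a x by apply: alex_f1_grp; rewrite (grp_labM HG).
have f1b : f1 b x = f1 a x by apply: alex_f1_grp.
have f1aVa : f1 (tri a (inv a)) x = f1 a x.
  by apply: alex_f1_grp; rewrite (mcq_lab_conj HM) // (grp_labV HG).
have f1bx : f1 (tri b x) (tri (inv a) x) = f1 (tri a x) (tri (inv a) x).
  by apply: alex_f1_grp; apply: (mcq_labT HM).
rewrite f1aVa in A4; rewrite f1ab in T5.
rewrite (mcq_triV HM) alex_A2 // f1ab f1b f1bx !scalerDr !scalerA A4 scalerDl.
by apply: (eq_by_diff T5); abel.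
Qed.

Lemma ext_MCQ : is_MCQ (labT lab (M:=M)) (mulT mul inv f1 phi2)
  (eT e phi2) (invT lab e inv f1 phi2) (triT tri f1 f2 phi1).
Proof.
split.
- exact: ext_group_family.
- exact: ext_conj.
- split; [exact: ext_trie | exact: ext_triM].
- exact: ext_selfdistr.
- move=> x a b; exact: ext_tri_hom.
Qed.

End Extension.

Section Converse.
Variables (X L : Type) (lab : X -> L) (mul : X -> X -> X) (e : L -> X)
  (inv : X -> X) (tri : X -> X -> X) (R : nzRingType) (f1 f2 : X -> X -> R)
  (phi1 phi2 : X -> X -> R^o) (eR : L -> X * R^o) (invR : X * R^o -> X * R^o).
Hypothesis HM : is_MCQ lab mul e inv tri.
Hypothesis HT : is_MCQ (labT lab (M := R^o)) (mulT mul inv f1 phi2) eR invR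
  (triT tri f1 f2 phi1).

Let HG := mcq_grp HM.
Let HGT := mcq_grp HT.

Lemma scale_one (c : R) : c *: (1 : R^o) = c.
Proof. exact: mulr1. Qed.

Ltac affine_simpl H :=
  rewrite ?scalerDr ?scalerN ?scaler0 ?scalerA ?scale_one ?oppr0 ?addr0 ?add0r in H.

Lemma conv_eE l : eR l = (e l, (eR l).2).
Proof.
suff <- : (eR l).1 = e l by case: (eR l).
have unit := congr1 fst (grp_mul1 HGT (e l, 0)).
rewrite /labT /mulT /= (grp_labe HG) in unit.
have labeR := grp_labe HGT l; rewrite /labT in labeR.
by rewrite -(grp_mulr1 HG (eR l).1) labeR.
Qed.

Lemma conv_invE p : invR p = (inv p.1, (invR p).2).
Proof.
suff <- : (invR p).1 = inv p.1 by case: (invR p).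
have inv_l := congr1 fst (grp_mulV HGT p).
rewrite /labT /mulT /= conv_eE in inv_l.
apply: (grp_linv_uniq HG) => //.
by have := grp_labV HGT p; rewrite /labT.
Qed.

Lemma conv_phi2_e_l l c : lab c = l -> phi2 (e l) c = - (eR l).2.
Proof.
move=> <-; have unit := congr1 snd (grp_mul1 HGT (c, 0)).
rewrite /labT /mulT /= conv_eE /= scaler0 addr0 in unit.
by apply: (eq_by_diff unit); abel.
Qed.

Lemma conv_inv_snd b v :
  (invR (b, v)).2 = (eR (lab b)).2 - phi2 (inv b) b - f1 (inv b) b *: v.
Proof.
have inv_l := congr1 snd (grp_mulV HGT (b, v)).
rewrite /labT /mulT /= [invR _]conv_invE conv_eE /= (grp_invK HG) in inv_l.
by rewrite -inv_l; abel.
Qed.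

(* The right inverse law, at coordinates 0 and 1, shows f1 b b^-1 is a left
   inverse of f1 b^-1 b. *)
Lemma conv_f1_inv b : f1 b (inv b) * f1 (inv b) b = 1.
Proof.
have inv_r v : v + f1 b (inv b) *: ((eR (lab b)).2 - phi2 (inv b) b
    - f1 (inv b) b *: v) + phi2 b (inv b) = (eR (lab b)).2.
  have := congr1 snd (grp_mulrV HGT (b, v)).
  by rewrite /labT /mulT /= [invR _]conv_invE conv_eE /= conv_inv_snd.
have inv_r0 := inv_r 0; have inv_r1 := inv_r 1.
affine_simpl inv_r0; affine_simpl inv_r1.
apply: (eq_by_diff (esym inv_r1)); apply: (eq_by_diff inv_r0); abel.
Qed.

Lemma conv_selfdistr x y z u v w :
  f1 (tri x y) z *: (f1 x y *: u + f2 x y *: v + phi1 x y) + f2 (tri x y) z *: w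
  + phi1 (tri x y) z =
  f1 (tri x z) (tri y z) *: (f1 x z *: u + f2 x z *: w + phi1 x z)
  + f2 (tri x z) (tri y z) *: (f1 y z *: v + f2 y z *: w + phi1 y z)
  + phi1 (tri x z) (tri y z).
Proof. exact: (congr1 snd (mcq_selfdistr HT (x, u) (y, v) (z, w))). Qed.

(* The constant term of conv_selfdistr is (T4), its coefficients are (A4). *)
Lemma conv_T4 x y z :
  f1 (tri x y) z *: phi1 x y + phi1 (tri x y) z
  = f1 (tri x z) (tri y z) *: phi1 x z + f2 (tri x z) (tri y z) *: phi1 y z
    + phi1 (tri x z) (tri y z).
Proof.
have sd0 := conv_selfdistr x y z 0 0 0; affine_simpl sd0.
by apply: (eq_by_diff sd0); abel.
Qed.

Lemma conv_A4 x y z :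
  [/\ f1 (tri x y) z * f1 x y = f1 (tri x z) (tri y z) * f1 x z,
      f1 (tri x y) z * f2 x y = f2 (tri x z) (tri y z) * f1 y z &
      f2 (tri x y) z = f1 (tri x z) (tri y z) * f2 x z
                       + f2 (tri x z) (tri y z) * f2 y z].
Proof.
have sd0 := conv_selfdistr x y z 0 0 0; affine_simpl sd0.
have sdu := conv_selfdistr x y z 1 0 0; affine_simpl sdu.
have sdv := conv_selfdistr x y z 0 1 0; affine_simpl sdv.
have sdw := conv_selfdistr x y z 0 0 1; affine_simpl sdw.
split; [apply: (eq_by_diff sdu) | apply: (eq_by_diff sdv) | apply: (eq_by_diff sdw)];
  by apply: (eq_by_diff (esym sd0)); abel.
Qed.

(* (T1) is the constant term of associativity in G_l × R. *)
Lemma conv_T1 a b c : lab a = lab b -> lab b = lab c ->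
  phi2 a b + phi2 (mul a b) c = f1 a (inv a) *: phi2 b c + phi2 a (mul b c).
Proof.
move=> ab bc.
have assoc := congr1 snd (grp_mulA HGT (a:=(a, 0)) (b:=(b, 0)) (c:=(c, 0)) ab bc).
rewrite /mulT /= in assoc; affine_simpl assoc.
by apply: (eq_by_diff assoc); abel.
Qed.

(* f1 x e_l = 1, from the unit law (ii) of X~ at coordinates 0 and 1. *)
Lemma conv_f1e x l : f1 x (e l) = 1.
Proof.
have unit0 := congr1 snd (mcq_trie HT (x, 0) l).
have unit1 := congr1 snd (mcq_trie HT (x, 1) l).
rewrite /triT /= conv_eE /= in unit0 unit1.
affine_simpl unit0; affine_simpl unit1.
by apply: (eq_by_diff unit1); apply: (eq_by_diff (esym unit0)); abel.
Qed.

Lemma conv_triM x a b w u v : lab a = lab b ->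
  f1 x (mul a b) *: w + f2 x (mul a b) *: (u + f1 a (inv a) *: v + phi2 a b)
  + phi1 x (mul a b) =
  f1 (tri x a) b *: (f1 x a *: w + f2 x a *: u + phi1 x a) + f2 (tri x a) b *: v
  + phi1 (tri x a) b.
Proof. by move=> ab; exact: (congr1 snd (mcq_triM HT (x, w) (a:=(a, u)) (b:=(b, v)) ab)). Qed.

Lemma conv_T3 x a b : lab a = lab b ->
  f2 x (mul a b) *: phi2 a b + phi1 x (mul a b)
  = f1 (tri x a) b *: phi1 x a + phi1 (tri x a) b.
Proof.
move=> ab; have triM0 := conv_triM x 0 0 0 ab; affine_simpl triM0.
by apply: (eq_by_diff triM0); abel.
Qed.

Lemma conv_A3 x a b : lab a = lab b ->
  f1 x (mul a b) = f1 (tri x a) b * f1 x a /\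
  f2 x (mul a b) = f1 (tri x a) b * f2 x a.
Proof.
move=> ab; have triM0 := conv_triM x 0 0 0 ab; affine_simpl triM0.
have triMw := conv_triM x 1 0 0 ab; affine_simpl triMw.
have triMu := conv_triM x 0 1 0 ab; affine_simpl triMu.
split; [apply: (eq_by_diff triMw) | apply: (eq_by_diff triMu)];
  by apply: (eq_by_diff (esym triM0)); abel.
Qed.

Lemma conv_tri_hom a b x u v w : lab a = lab b ->
  f1 (mul a b) x *: (u + f1 a (inv a) *: v + phi2 a b) + f2 (mul a b) x *: w
  + phi1 (mul a b) x =
  f1 a x *: u + f2 a x *: w + phi1 a x
  + f1 (tri a x) (tri (inv a) x) *: (f1 b x *: v + f2 b x *: w + phi1 b x)
  + phi2 (tri a x) (tri b x).
Proof.
move=> ab; have hom := congr1 snd (mcq_Mtri HT (x, w) (a:=(a, u)) (b:=(b, v)) ab).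
by rewrite /triT /mulT /= (mcq_triV HM) in hom.
Qed.

Lemma conv_T5 a b x : lab a = lab b ->
  f1 (mul a b) x *: phi2 a b + phi1 (mul a b) x
  = phi1 a x + f1 (tri a x) (tri (inv a) x) *: phi1 b x
    + phi2 (tri a x) (tri b x).
Proof.
move=> ab; have hom0 := conv_tri_hom x 0 0 0 ab; affine_simpl hom0.
by apply: (eq_by_diff hom0); abel.
Qed.

Lemma conv_A2 a b x : lab a = lab b ->
  f1 (mul a b) x = f1 a x /\
  f2 (mul a b) x = f2 a x + f1 (tri a x) (tri (inv a) x) * f2 b x.
Proof.
move=> ab; have hom0 := conv_tri_hom x 0 0 0 ab; affine_simpl hom0.
have homu := conv_tri_hom x 1 0 0 ab; affine_simpl homu.
have homw := conv_tri_hom x 0 0 1 ab; affine_simpl homw.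
split; [apply: (eq_by_diff homu) | apply: (eq_by_diff homw)];
  by apply: (eq_by_diff (esym hom0)); abel.
Qed.

(* f1 a x depends only on the group of a: compare both with f1 e_l x. *)
Lemma conv_f1_grp a b x : lab a = lab b -> f1 a x = f1 b x.
Proof.
move=> ab.
have [f1a _] := conv_A2 x (grp_labe HG (lab a)).
have [f1b _] := conv_A2 x (grp_labe HG (lab b)).
rewrite (grp_mul1 HG) in f1a; rewrite (grp_mul1 HG) in f1b.
by rewrite f1a f1b ab.
Qed.

Lemma conv_conj a b u v : lab a = lab b ->
  f1 a b *: u + f2 a b *: v + phi1 a b =
  ((eR (lab b)).2 - phi2 (inv b) b - f1 (inv b) b *: v) + f1 (inv b) b *: u
  + phi2 (inv b) a + f1 (mul (inv b) a) (inv (mul (inv b) a)) *: v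
  + phi2 (mul (inv b) a) b.
Proof.
move=> ab; have conj := congr1 snd (mcq_conj HT (a:=(a, u)) (b:=(b, v)) ab).
by rewrite /triT /mulT /= [invR _]conv_invE /= conv_inv_snd (grp_invK HG) in conj.
Qed.

Lemma conv_A1 a b : lab a = lab b -> f1 a b + f2 a b = f1 a (mul (inv a) b).
Proof.
move=> ab; have conj0 := conv_conj 0 0 ab; affine_simpl conj0.
have conju := conv_conj 1 0 ab; affine_simpl conju.
have conjv := conv_conj 0 1 ab; affine_simpl conjv.
have twist : f1 (mul (inv b) a) (inv (mul (inv b) a)) = f1 a (mul (inv a) b).
  by rewrite (grp_invMV HG) //; apply: conv_f1_grp; rewrite (grp_labM HG) ?(grp_labV HG).
rewrite twist in conjv.
apply: (eq_by_diff conju); apply: (eq_by_diff (esym conj0)).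
by apply: (eq_by_diff conjv); apply: (eq_by_diff (esym conj0)); abel.
Qed.

(* (T2): the constant term of conv_conj, rewritten with two instances of
   (T1) multiplied by f1 b b^-1 (cancelling by conv_f1_inv). *)
Lemma conv_T2 a b : lab a = lab b ->
  f1 b (inv b) *: phi1 a b + phi2 b (mul (mul (inv b) a) b) = phi2 a b.
Proof.
move=> ab; have conj0 := conv_conj 0 0 ab; affine_simpl conj0.
have lVb : lab (inv b) = lab b by rewrite (grp_labV HG).
have lVba : lab (inv b) = lab a by rewrite (grp_labV HG).
have lc : lab (mul (mul (inv b) a) b) = lab b by rewrite !(grp_labM HG) ?lVb.
have T1a := conv_T1 lVba ab.
have T1b := conv_T1 lVb (esym lc).
rewrite (grp_mul_conj HG) // (grp_mulV HG) (conv_phi2_e_l lc) in T1b.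
rewrite (grp_invK HG) in T1a T1b.
have sT1a := congr1 (fun m : R^o => f1 b (inv b) *: m) T1a.
have sT1b := congr1 (fun m : R^o => f1 b (inv b) *: m) T1b.
rewrite /= !scalerDr !scalerA conv_f1_inv !scale1r in sT1a sT1b.
rewrite conj0 !scalerDr !scalerN.
by apply: (eq_by_diff sT1a); apply: (eq_by_diff (esym sT1b)); rewrite scalerN; abel.
Qed.

Lemma conv_augmented : augmented_alex_pair lab mul e inv tri f1 f2 phi1 phi2.
Proof.
split; split.
- exact: conv_A1.
- move=> a b x ab; split; first exact: conv_f1_grp.
  rewrite (proj2 (conv_A2 x ab)); congr (_ + _ * _).
  by apply: conv_f1_grp; apply: (mcq_labT HM).
- split; [exact: conv_f1e | move=> x a b ab; exact: conv_A3].
- exact: conv_A4.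
- exact: conv_T1.
- exact: conv_T2.
- exact: conv_T3.
- exact: conv_T4.
- move=> a b x ab; exact: conv_T5.
Qed.

End Converse.

Unset Implicit Arguments.

Theorem proposition2p4 (X L : Type) (lab : X -> L) (mul : X -> X -> X)
  (e : L -> X) (inv : X -> X) (tri : X -> X -> X) (R : nzRingType)
  (f1 f2 : X -> X -> R) :
  is_MCQ lab mul e inv tri ->
  (forall (M : lmodType R) (phi1 phi2 : X -> X -> M),
     augmented_alex_pair lab mul e inv tri f1 f2 phi1 phi2 ->
     is_MCQ (labT lab (M := M))
            (mulT mul inv f1 phi2)
            (eT e phi2)
            (invT lab e inv f1 phi2)
            (triT tri f1 f2 phi1)) /\
  (forall phi1 phi2 : X -> X -> R^o,
     (exists (eR : L -> X * R^o) (invR : X * R^o -> X * R^o),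
        is_MCQ (labT lab (M := R^o)) (mulT mul inv f1 phi2) eR invR
               (triT tri f1 f2 phi1)) ->
     augmented_alex_pair lab mul e inv tri f1 f2 phi1 phi2).
Proof.
move=> HM; split.
- by move=> M phi1 phi2 [HA HT]; apply: ext_MCQ.
- by move=> phi1 phi2 [eR [invR HT]]; apply: conv_augmented HT.
Qed.
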